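(* Let $M^2$ be a surface in $\mathbb{R}^4$ free of flat points. Then the tangent indicatrix $\chi$ is a rectangular hyperbola (a Lorentz circle) at each point if and only if the ellipse of normal curvature at each point is a line segment which is not collinear with the mean curvature vector field $H$.
   Context: Let $M^2: z=z(u,v)$ be a regular surface in $\mathbb{R}^4$ with first fundamental form $I=E\,du^2+2F\,du\,dv+G\,dv^2$, $W=\sqrt{EG-F^2}$, second fundamental form $\sigma$, and mean curvature vector $H=\frac12(\sigma(x,x)+\sigma(y,y))$ ($\{x,y\}$ any orthonormal tangent basis). Choose an orthonormal normal frame $\{e_1,e_2\}$ with $\{z_u,z_v,e_1,e_2\}$ positively oriented, write $\sigma(z_u,z_u)=c_{11}^1e_1+c_{11}^2e_2$, $\sigma(z_u,z_v)=c_{12}^1e_1+c_{12}^2e_2$, $\sigma(z_v,z_v)=c_{22}^1e_1+c_{22}^2e_2$, and set $L=\frac{2}{W}(c_{11}^1c_{12}^2-c_{12}^1c_{11}^2)$, $M=\frac{1}{W}(c_{11}^1c_{22}^2-c_{22}^1c_{11}^2)$, $N=\frac{2}{W}(c_{12}^1c_{22}^2-c_{22}^1c_{12}^2)$. A point is flat if $L=M=N=0$; ''free of flat points'' means $(L,M,N)\ne(0,0,0)$ everywhere. The principal normal curvatures $\nu',\nu''$ at a point are the roots of $(EG-F^2)\nu^2-(EN+GL-2FM)\nu+(LN-M^2)=0$, with corresponding $I$-orthogonal principal directions; the tangent indicatrix $\chi$ is the conic $\nu'X^2+\nu''Y^2=\varepsilon$ ($\varepsilon=\pm1$) in Cartesian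 coordinates of $T_pM^2$ w.r.t. an orthonormal basis of principal directions; it is a rectangular hyperbola iff $\nu''=-\nu'\neq0$. The ellipse of normal curvature at $p$ is $\{\sigma(v,v): v\in T_pM^2, |v|=1\}$, centered at $H(p)$; ''not collinear with $H$'' means the segment's direction is not parallel to $H(p)$. *)

From HB Require Import structures.
From mathcomp Require Import all_boot all_order all_algebra.
From mathcomp Require Import all_classical all_reals all_analysis.
Set Implicit Arguments. Unset Strict Implicit. Unset Printing Implicit Defensive.
Import Order.TTheory GRing.Theory Num.Theory.
Import numFieldNormedType.Exports.
Local Open Scope classical_set_scope.
Local Open Scope ring_scope.

Section Surf.
Variable R : realType.

Definition vec4 := 'rV[R]_4.

Definition dot (x y : vec4) : R := \sum_(j < 4) x ord0 j * y ord0 j.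

Definition param := R -> R -> vec4.

Definition pu (z : param) : param := fun u v => derive1 (fun t => z t v) u.
Definition pv (z : param) : param := fun u v => derive1 (fun t => z u t) v.

Definition iterd (w : seq bool) (z : param) : param :=
  foldr (fun b f => if b then pu f else pv f) z w.

(* z is C^infinity on the open set D: every iterated partial derivative is
   jointly continuous on D and partially derivable in u and in v. *)
Definition smooth_on (D : set (R * R)) (z : param) : Prop :=
  forall (w : seq bool) (p : R * R), D p ->
    [/\ (fun q : R * R => iterd w z q.1 q.2) @ p --> iterd w z p.1 p.2,
        derivable (fun t => iterd w z t p.2) p.1 1
      & derivable (fun t => iterd w z p.1 t) p.2 1].

Definition regular_at (z : param) (p : R * R) : Prop :=
  forall a b : R, a *: pu z p.1 p.2 + b *: pv z p.1 p.2 = 0 -> a = 0 /\ b = 0.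

Definition fE z (p : R * R) := dot (pu z p.1 p.2) (pu z p.1 p.2).
Definition fF z (p : R * R) := dot (pu z p.1 p.2) (pv z p.1 p.2).
Definition fG z (p : R * R) := dot (pv z p.1 p.2) (pv z p.1 p.2).
Definition fW z p := Num.sqrt (fE z p * fG z p - fF z p ^+ 2).

Definition zuu z (p : R * R) := pu (pu z) p.1 p.2.
Definition zuv z (p : R * R) := pv (pu z) p.1 p.2.
Definition zvv z (p : R * R) := pv (pv z) p.1 p.2.

Definition mat4 (a b c d : vec4) : 'M[R]_4 :=
  \matrix_(i < 4, j < 4) ([:: a; b; c; d]`_i) ord0 j.

Definition normal_frame_at (z : param) (e1 e2 : param) (p : R * R) : Prop :=
  let a := e1 p.1 p.2 in let b := e2 p.1 p.2 in
  [/\ dot a a = 1, dot b b = 1, dot a b = 0,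
      [/\ dot a (pu z p.1 p.2) = 0, dot a (pv z p.1 p.2) = 0,
          dot b (pu z p.1 p.2) = 0 & dot b (pv z p.1 p.2) = 0]
    & 0 < \det (mat4 (pu z p.1 p.2) (pv z p.1 p.2) a b)].

Section Frame.
Variables (z e1 e2 : param) (p : R * R).
Let E1 := e1 p.1 p.2.
Let E2 := e2 p.1 p.2.
(* coefficients of the second fundamental form:
   sigma(z_i,z_j) = normal part of z_ij = c_ij^1 e1 + c_ij^2 e2 *)
Definition c11 (k : bool) := dot (zuu z p) (if k then E1 else E2).
Definition c12 (k : bool) := dot (zuv z p) (if k then E1 else E2).
Definition c22 (k : bool) := dot (zvv z p) (if k then E1 else E2).
(* true = index 1, false = index 2 *)
Definition s11 : vec4 := c11 true *: E1 + c11 false *: E2.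
Definition s12 : vec4 := c12 true *: E1 + c12 false *: E2.
Definition s22 : vec4 := c22 true *: E1 + c22 false *: E2.

(* sigma(x,x) for the tangent vector x = a z_u + b z_v, x given as (a,b) *)
Definition sigma (x : R * R) : vec4 :=
  x.1 ^+ 2 *: s11 + (2 * x.1 * x.2) *: s12 + x.2 ^+ 2 *: s22.
Definition Iform (x y : R * R) : R :=
  fE z p * x.1 * y.1 + fF z p * (x.1 * y.2 + x.2 * y.1) + fG z p * x.2 * y.2.

Definition cL := 2 / fW z p * (c11 true * c12 false - c12 true * c11 false).
Definition cM := 1 / fW z p * (c11 true * c22 false - c22 true * c11 false).
Definition cN := 2 / fW z p * (c12 true * c22 false - c22 true * c12 false).

Definition flat_point : Prop := [/\ cL = 0, cM = 0 & cN = 0].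

Definition principal_normal_curvatures (nu1 nu2 : R) : Prop :=
  forall x : R,
    (fE z p * fG z p - fF z p ^+ 2) * x ^+ 2
    - (fE z p * cN + fG z p * cL - 2 * fF z p * cM) * x + (cL * cN - cM ^+ 2)
    = (fE z p * fG z p - fF z p ^+ 2) * (x - nu1) * (x - nu2).

(* the tangent indicatrix nu' X^2 + nu'' Y^2 = eps is a rectangular hyperbola *)
Definition indicatrix_rect_hyperbola : Prop :=
  exists nu1 nu2, principal_normal_curvatures nu1 nu2 /\ nu2 = - nu1 /\ nu1 != 0.

Definition normal_ellipse : set vec4 :=
  [set sigma x | x in [set x : R * R | Iform x x = 1]].

Definition mean_curvature_vector (h : vec4) : Prop :=
  exists x y : R * R, [/\ Iform x x = 1, Iform y y = 1, Iform x y = 0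
                     & h = 2^-1 *: (sigma x + sigma y)].

(* the ellipse of normal curvature is a (non-degenerate) line segment [A,B]
   whose direction B - A is not parallel to H *)
Definition ellipse_segment_not_collinear_H : Prop :=
  exists A B : vec4,
    [/\ A != B,
        normal_ellipse = [set (1 - t) *: A + t *: B | t in `[0, 1]%classic]
      & forall h, mean_curvature_vector h ->
          forall s t : R, s *: h + t *: (B - A) = 0 -> s = 0 /\ t = 0].
End Frame.
End Surf.

(* Take a Gram-Schmidt orthonormal tangent basis X, Y and write sigma(X,X), sigma(Y,Y) and
   sigma(X,Y) in the normal frame. For c^2 + s^2 = 1,
     sigma(cX + sY) = H + (c^2 - s^2) (sigma(X,X) - sigma(Y,Y)) / 2 + 2 c s sigma(X,Y),
   so the normal ellipse is a segment exactly when sigma(X,X) - sigma(Y,Y) and sigma(X,Y) are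
   parallel, i.e. when their cross product vanishes. The middle coefficient E N + G L - 2 F M
   of the principal-curvature quadratic is 2 W^2 times this cross product, and the roots are
   opposite and nonzero exactly when it vanishes and L N - M^2 < 0. Away from flat points the
   sign condition and the non-collinearity with H come for free: their failure would put all
   values of sigma on one line through the origin, forcing L = M = N = 0. *)

From HB Require Import structures.
From mathcomp Require Import all_boot all_order all_algebra.
From mathcomp Require Import all_classical all_reals all_analysis.
From mathcomp Require Import ring lra.
Import Order.TTheory GRing.Theory Num.Theory.
Import numFieldNormedType.Exports.
Local Open Scope classical_set_scope.
Local Open Scope ring_scope.
Set Implicit Arguments. Unset Strict Implicit.

Lemma scaleRE (R : realType) (c x : R) : c *: x = c * x. Proof. by []. Qed.

Definition fctRE := (addrfctE, opprfctE, scalrfctE, scaleRE).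

Section Scalars.
Variable R : rcfType.

Lemma sqr_add_eq0 (x y : R) : x ^+ 2 + y ^+ 2 = 0 -> x = 0 /\ y = 0.
Proof.
move/eqP; rewrite paddr_eq0 ?sqr_ge0 // !sqrf_eq0.
by case/andP => /eqP-> /eqP->.
Qed.

Lemma half_angle (U V : R) : U ^+ 2 + V ^+ 2 = 1 ->
  exists C S : R, [/\ C ^+ 2 + S ^+ 2 = 1, C ^+ 2 - S ^+ 2 = U & 2 * C * S = V].
Proof.
move=> UV; have [U_1|U_n1] := eqVneq U (-1).
  have V0 : V = 0 by apply/eqP; rewrite -sqrf_eq0; apply/eqP; move: UV; rewrite U_1; lra.
  by exists 0, 1; rewrite U_1 V0; split; ring.
have U_gt : 0 < 1 + U.
  rewrite lt_def; apply/andP; split; last by nra.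
  by apply: contra_neq U_n1 => ?; lra.
pose m := Num.sqrt (2 * (1 + U)).
have m2 : m ^+ 2 = 2 * (1 + U) by rewrite sqr_sqrtr //; lra.
have m_neq0 : m != 0 by apply: contra_eq_neq m2 => ->; lra.
have V2 : V ^+ 2 = 1 - U ^+ 2 by lra.
exists ((1 + U) / m), (V / m); rewrite !expr_div_n m2 V2; split.
- by field; lra.
- by field; lra.
- have -> : 2 * ((1 + U) / m) * (V / m) = 2 * (1 + U) * V / m ^+ 2 by field.
  by rewrite m2; field; lra.
Qed.

Lemma unit_rotation (C S c s : R) : C ^+ 2 + S ^+ 2 = 1 ->
  (c * C + s * S) ^+ 2 + (c * S - s * C) ^+ 2 = c ^+ 2 + s ^+ 2.
Proof.
move=> CS; transitivity ((c ^+ 2 + s ^+ 2) * (C ^+ 2 + S ^+ 2)); first by ring.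
by rewrite CS mulr1.
Qed.

Lemma orthonormal_cols (c1 s1 c2 s2 : R) :
  c1 ^+ 2 + s1 ^+ 2 = 1 -> c2 ^+ 2 + s2 ^+ 2 = 1 -> c1 * c2 + s1 * s2 = 0 ->
  [/\ c1 ^+ 2 + c2 ^+ 2 = 1, s1 ^+ 2 + s2 ^+ 2 = 1 & c1 * s1 + c2 * s2 = 0].
Proof.
move=> h1 h2 h3; pose r := c1 * s2 - s1 * c2.
have : c2 * (c1 ^+ 2 + s1 ^+ 2) = - r * s1 + c1 * (c1 * c2 + s1 * s2) by rewrite /r; ring.
rewrite h1 h3 mulr1 mulr0 addr0 => hc2.
have : s2 * (c1 ^+ 2 + s1 ^+ 2) = r * c1 + s1 * (c1 * c2 + s1 * s2) by rewrite /r; ring.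
rewrite h1 h3 mulr1 mulr0 addr0 => hs2.
have r2 : r ^+ 2 = 1 by rewrite -h2 hc2 hs2 -[LHS]mulr1 -h1; ring.
have cross0 : c1 * s1 + (- r * s1) * (r * c1) = c1 * s1 * (1 - r ^+ 2) by ring.
by rewrite hc2 hs2 cross0 !exprMn sqrrN r2 !mul1r subrr mulr0 (addrC (s1 ^+ 2)) h1.
Qed.

Lemma antipodal_roots (D T P : R) : 0 < D ->
  (exists n, (forall x, D * x ^+ 2 - T * x + P = D * (x - n) * (x - - n)) /\ n != 0)
  <-> T = 0 /\ P < 0.
Proof.
move=> D_gt0; split.
- case=> n [roots n_neq0]; have := roots 1; have := roots (-1); have := roots 0.
  have : 0 < n ^+ 2 by rewrite exprn_even_gt0.
  split; nra.
- case=> -> P_lt0; have q_gt0 : 0 < - P / D by rewrite divr_gt0 // oppr_gt0.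
  exists (Num.sqrt (- P / D)); split; last by rewrite gt_eqF // sqrtr_gt0.
  move=> x; set n := Num.sqrt _.
  have -> : D * (x - n) * (x - - n) = D * x ^+ 2 - D * n ^+ 2 by ring.
  by rewrite sqr_sqrtr ?ltW //; field; rewrite gt_eqF.
Qed.

Lemma trace0_det_lt0 (E F G L M N : R) : 0 < E -> 0 < E * G - F ^+ 2 ->
  E * N + G * L - 2 * F * M = 0 -> ~ [/\ L = 0, M = 0 & N = 0] ->
  L * N - M ^+ 2 < 0.
Proof.
move=> E_gt0 disc_gt0 trace0 nonzero; rewrite ltNge; apply/negP => det_ge0; apply: nonzero.
have EN : E * N = 2 * F * M - G * L by lra.
have : E ^+ 2 * (L * N - M ^+ 2) + (E * M - F * L) ^+ 2 + (E * G - F ^+ 2) * L ^+ 2 = 0.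
  have -> : E ^+ 2 * (L * N - M ^+ 2) = E * L * (E * N) - (E * M) ^+ 2 by ring.
  by rewrite EN; ring.
have t1 : 0 <= E ^+ 2 * (L * N - M ^+ 2) := mulr_ge0 (sqr_ge0 _) det_ge0.
have t2 : 0 <= (E * M - F * L) ^+ 2 := sqr_ge0 _.
have t3 : 0 <= (E * G - F ^+ 2) * L ^+ 2 := mulr_ge0 (ltW disc_gt0) (sqr_ge0 _).
move/eqP; rewrite paddr_eq0 ?addr_ge0 // paddr_eq0 // => /andP[/andP[_]].
rewrite sqrf_eq0 => /eqP EM_FL; rewrite mulf_eq0 (gt_eqF disc_gt0) sqrf_eq0 => /eqP L0.
have M0 : M = 0.
  by move/eqP: EM_FL; rewrite L0 mulr0 subr0 mulf_eq0 (gt_eqF E_gt0) => /eqP.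
split=> //; move/eqP: EN; rewrite L0 M0 !mulr0 subr0 mulf_eq0 (gt_eqF E_gt0).
by move/eqP.
Qed.

End Scalars.

Section Plane.
Variable R : realType.
Local Notation vec2 := (bool -> R).

Definition cross (u v : vec2) : R := u true * v false - u false * v true.

Lemma cross_lincomb (X Y : vec2) (l1 m1 l2 m2 : R) :
  cross (l1 *: X + m1 *: Y) (l2 *: X + m2 *: Y) = (l1 * m2 - l2 * m1) * cross X Y.
Proof. by rewrite /cross !fctRE; ring. Qed.

Lemma cross_lincomb3 (u v w : vec2) (x1 y1 z1 x2 y2 z2 : R) :
  cross (x1 *: u + y1 *: v + z1 *: w) (x2 *: u + y2 *: v + z2 *: w) =
  (x1 * y2 - y1 * x2) * cross u v + (x1 * z2 - z1 * x2) * cross u w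
  + (y1 * z2 - z1 * y2) * cross v w.
Proof. by rewrite /cross !fctRE; ring. Qed.

Lemma cross_free (u v : vec2) (s t : R) :
  cross u v != 0 -> s *: u + t *: v = 0 -> s = 0 /\ t = 0.
Proof.
move=> huv stuv; have st k : s * u k + t * v k = 0.
  by have := congr1 (fun f => f k) stuv; rewrite !fctRE.
have /eqP : s * cross u v = 0.
  have -> : s * cross u v = (s * u true + t * v true) * v false
                            - (s * u false + t * v false) * v true by rewrite /cross; ring.
  by rewrite !st; ring.
have /eqP : t * cross u v = 0.
  have -> : t * cross u v = (s * u false + t * v false) * u true
                            - (s * u true + t * v true) * u false by rewrite /cross; ring.
  by rewrite !st; ring.
by rewrite !mulf_eq0 (negbTE huv) !orbF => /eqP-> /eqP->.
Qed.

Lemma cross_eq0_unit_dir (D Q : vec2) : cross D Q = 0 ->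
  exists U V (w : vec2), [/\ U ^+ 2 + V ^+ 2 = 1, D = U *: w & Q = V *: w].
Proof.
move=> DQ.
suff dir_at k0 : D k0 ^+ 2 + Q k0 ^+ 2 != 0 -> exists U V (w : vec2),
    [/\ U ^+ 2 + V ^+ 2 = 1, D = U *: w & Q = V *: w].
  have [/sqr_add_eq0[Dt Qt]|] := eqVneq (D true ^+ 2 + Q true ^+ 2) 0; last exact: dir_at.
  have [/sqr_add_eq0[Df Qf]|] := eqVneq (D false ^+ 2 + Q false ^+ 2) 0; last exact: dir_at.
  exists 1, 0, 0; split; first by ring.
    by apply/funext => -[]; rewrite !fctRE /= ?Dt ?Df mulr0.
  by apply/funext => -[]; rewrite !fctRE /= ?Qt ?Qf mulr0.
move=> nz; pose x := D k0; pose y := Q k0.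
have collinear k : x * Q k = y * D k.
  by move: DQ; rewrite /x /y /cross; case: k0 {nz x y}; case: k; lra.
pose r := Num.sqrt (x ^+ 2 + y ^+ 2).
have r2 : r ^+ 2 = x ^+ 2 + y ^+ 2 by rewrite sqr_sqrtr // addr_ge0 ?sqr_ge0.
have r_neq0 : r != 0 by apply: contra_neq nz => r0; rewrite -r2 r0 expr0n.
exists (x / r), (y / r), (r^-1 *: (x *: D + y *: Q)); split.
- by rewrite !expr_div_n -mulrDl -r2 divff // sqrf_eq0.
- apply/funext => k; rewrite !fctRE.
  have -> : x / r * (r^-1 * (x * D k + y * Q k)) = (x ^+ 2 * D k + y * (x * Q k)) / r ^+ 2.
    by field.
  by rewrite collinear r2; field.
- apply/funext => k; rewrite !fctRE.
  have -> : y / r * (r^-1 * (x * D k + y * Q k)) = (x * (y * D k) + y ^+ 2 * Q k) / r ^+ 2.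
    by field.
  by rewrite -collinear r2; field.
Qed.

Lemma cross_eq0_dir (D Q : vec2) : cross D Q = 0 -> exists C S (w : vec2),
  [/\ C ^+ 2 + S ^+ 2 = 1, D = (C ^+ 2 - S ^+ 2) *: w & Q = (2 * C * S) *: w].
Proof.
case/cross_eq0_unit_dir => U [V [w [UV -> ->]]].
by have [C [S [CS <- <-]]] := half_angle UV; exists C, S, w.
Qed.

End Plane.

Section NormalEllipse.
Variable R : realType.
Local Notation vec2 := (bool -> R).
(* [P1], [P2], [P12] stand for the normal coordinates of sigma(X,X), sigma(Y,Y), sigma(X,Y)
   for an orthonormal tangent basis X, Y; [ellipse_point c s] is then sigma(cX + sY). *)
Variables P1 P2 P12 : vec2.

Definition ellipse_point (c s : R) : vec2 :=
  c ^+ 2 *: P1 + (2 * c * s) *: P12 + s ^+ 2 *: P2.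

Definition ellipse_center : vec2 := 2^-1 *: (P1 + P2).

Definition ellipse_flat : Prop :=
  [/\ cross P1 P2 = 0, cross P1 P12 = 0 & cross P2 P12 = 0].

Lemma ellipse_flat_span (X Y : vec2) (x1 y1 x2 y2 x3 y3 : R) : cross X Y = 0 ->
  P1 = x1 *: X + y1 *: Y -> P2 = x2 *: X + y2 *: Y -> P12 = x3 *: X + y3 *: Y ->
  ellipse_flat.
Proof. by move=> XY e1 e2 e12; rewrite /ellipse_flat e1 e2 e12 !cross_lincomb XY !mulr0. Qed.

Lemma ellipse_center_orthonormal (c1 s1 c2 s2 : R) :
  c1 ^+ 2 + s1 ^+ 2 = 1 -> c2 ^+ 2 + s2 ^+ 2 = 1 -> c1 * c2 + s1 * s2 = 0 ->
  2^-1 *: (ellipse_point c1 s1 + ellipse_point c2 s2) = ellipse_center.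
Proof.
move=> h1 h2 h3; have [cc ss cs] := orthonormal_cols h1 h2 h3.
apply/funext => k; rewrite /ellipse_point /ellipse_center !fctRE.
transitivity (2^-1 * ((c1 ^+ 2 + c2 ^+ 2) * P1 k + 2 * (c1 * s1 + c2 * s2) * P12 k
                      + (s1 ^+ 2 + s2 ^+ 2) * P2 k)); first by ring.
by rewrite cc ss cs; ring.
Qed.

Lemma ellipse_segment : ~ ellipse_flat -> cross (P1 - P2) P12 = 0 ->
  exists A B : vec2,
  [/\ forall c s, c ^+ 2 + s ^+ 2 = 1 ->
        exists2 t, 0 <= t <= 1 & ellipse_point c s = (1 - t) *: A + t *: B,
      forall t, 0 <= t <= 1 ->
        exists c s, c ^+ 2 + s ^+ 2 = 1 /\ ellipse_point c s = (1 - t) *: A + t *: B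
    & cross ellipse_center (B - A) != 0].
Proof.
move=> nonflat DQ.
have [C [S [w [CS hD hQ]]]] : exists C S (w : vec2), [/\ C ^+ 2 + S ^+ 2 = 1,
    2^-1 *: (P1 - P2) = (C ^+ 2 - S ^+ 2) *: w & P12 = (2 * C * S) *: w].
  apply: cross_eq0_dir; move: DQ; rewrite /cross !fctRE => DQ.
  by rewrite -[RHS](mulr0 2^-1) -DQ; ring.
have hP1 k : P1 k = ellipse_center k + (C ^+ 2 - S ^+ 2) * w k.
  by move/(congr1 (fun f => f k)): hD; rewrite /ellipse_center !fctRE => <-; field.
have hP2 k : P2 k = ellipse_center k - (C ^+ 2 - S ^+ 2) * w k.
  by move/(congr1 (fun f => f k)): hD; rewrite /ellipse_center !fctRE => <-; field.
have hP12 k : P12 k = 2 * C * S * w k.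
  by move/(congr1 (fun f => f k)): hQ; rewrite !fctRE.
have point c s : ellipse_point c s =
    (c ^+ 2 + s ^+ 2) *: ellipse_center + ((c * C + s * S) ^+ 2 - (c * S - s * C) ^+ 2) *: w.
  by apply/funext => k; rewrite /ellipse_point !fctRE hP1 hP2 hP12; ring.
have seg t : (1 - t) *: (ellipse_center - w) + t *: (ellipse_center + w) =
    1 *: ellipse_center + (t - (1 - t)) *: w.
  by apply/funext => k; rewrite !fctRE; ring.
exists (ellipse_center - w), (ellipse_center + w); split.
- move=> c s cs1; have := unit_rotation c s CS; rewrite cs1 => unit.
  exists ((c * C + s * S) ^+ 2).
    by rewrite sqr_ge0 /=; have := sqr_ge0 (c * S - s * C); lra.
  by rewrite point seg cs1; congr (_ + _ *: _); lra.
- move=> t /andP[t_ge0 t_le1].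
  pose al := Num.sqrt t; pose ga := Num.sqrt (1 - t).
  have al2 : al ^+ 2 = t by rewrite sqr_sqrtr.
  have ga2 : ga ^+ 2 = 1 - t by rewrite sqr_sqrtr // subr_ge0.
  pose c := al * C - ga * S; pose s := al * S + ga * C.
  have cC : c * C + s * S = al by rewrite -[RHS]mulr1 -CS /c /s; ring.
  have cS : c * S - s * C = - ga by rewrite -[ga]mulr1 -CS /c /s; ring.
  exists c, s; rewrite point seg -(unit_rotation c s CS) cC cS sqrrN al2 ga2 subrKC.
  by split.
- apply/eqP => cross0; apply: nonflat.
  have cw : cross ellipse_center w = 0.
    have : cross ellipse_center (ellipse_center + w - (ellipse_center - w)) =
           2 * cross ellipse_center w by rewrite /cross !fctRE; ring.
    by rewrite cross0 => /esym/eqP; rewrite mulf_eq0 pnatr_eq0 /= => /eqP.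
  apply: (ellipse_flat_span (x1 := 1) (y1 := C ^+ 2 - S ^+ 2) (x2 := 1) (y2 := S ^+ 2 - C ^+ 2)
                            (x3 := 0) (y3 := 2 * C * S) cw);
    by apply/funext => k; rewrite !fctRE ?hP1 ?hP2 ?hP12; ring.
Qed.

Lemma segment_ellipse_cross0 (A B : vec2) :
  (forall c s, c ^+ 2 + s ^+ 2 = 1 ->
     exists t, ellipse_point c s = (1 - t) *: A + t *: B) ->
  cross (P1 - P2) P12 = 0.
Proof.
move=> seg.
have at_point c s t k : ellipse_point c s = (1 - t) *: A + t *: B ->
    c ^+ 2 * P1 k + 2 * c * s * P12 k + s ^+ 2 * P2 k = (1 - t) * A k + t * B k.
  by move/(congr1 (fun f => f k)); rewrite /ellipse_point !fctRE.
(* Differences of the points at (1, 0), (0, 1) and at (3/5, 4/5), (3/5, -4/5) are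
   [P1 - P2] and [48/25 P12]; both are multiples of [B - A]. *)
have [|t1 /at_point e1] := seg 1 0; first by ring.
have [|t2 /at_point e2] := seg 0 1; first by ring.
have [|t3 /at_point e3] := seg (3 / 5) (4 / 5); first by field.
have [|t4 /at_point e4] := seg (3 / 5) (- (4 / 5)); first by field.
have D k : P1 k - P2 k = (t1 - t2) * (B k - A k).
  by have := e1 k; have := e2 k; lra.
have Q k : P12 k = 25 / 48 * (t3 - t4) * (B k - A k).
  by have := e3 k; have := e4 k; lra.
by rewrite /cross !fctRE !D !Q; ring.
Qed.

End NormalEllipse.

Section GramSchmidt.
Variable R : realType.
Local Notation vec2 := (bool -> R).
Variables (E F G e W : R) (a b d : vec2).

(* Coordinates in (z_u, z_v) of c X + s Y, where X = z_u / e and Y = (E z_v - F z_u) / (e W)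
   is the Gram-Schmidt basis; [e] plays the role of sqrt E. *)
Definition gs_coords (c s : R) : R * R := (c / e - s * F / (e * W), s * e / W).

Definition quad_bil (x y : R * R) : vec2 :=
  (x.1 * y.1) *: a + (x.1 * y.2 + x.2 * y.1) *: b + (x.2 * y.2) *: d.

Local Notation P1 := (quad_bil (gs_coords 1 0) (gs_coords 1 0)).
Local Notation P2 := (quad_bil (gs_coords 0 1) (gs_coords 0 1)).
Local Notation P12 := (quad_bil (gs_coords 1 0) (gs_coords 0 1)).

Lemma quad_gs_coords c s :
  quad_bil (gs_coords c s) (gs_coords c s) = ellipse_point P1 P2 P12 c s.
Proof. by apply/funext => k; rewrite /quad_bil /gs_coords /ellipse_point !fctRE /=; ring. Qed.

Hypotheses (eE : E = e ^+ 2) (WG : W ^+ 2 = E * G - F ^+ 2).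
Hypotheses (e_neq0 : e != 0) (W_neq0 : W != 0).

Let G_eq : G = (W ^+ 2 + F ^+ 2) / e ^+ 2.
Proof. by rewrite WG eE; field. Qed.

Lemma gs_coords_orthonormal c s c' s' :
  let x := gs_coords c s in let y := gs_coords c' s' in
  E * x.1 * y.1 + F * (x.1 * y.2 + x.2 * y.1) + G * x.2 * y.2 = c * c' + s * s'.
Proof. by move=> x y; rewrite /x /y /gs_coords /= G_eq eE; field; rewrite e_neq0 W_neq0. Qed.

Lemma gs_coords_surj x : exists c s, x = gs_coords c s.
Proof.
case: x => x1 x2; exists (e * x1 + F * x2 / e), (x2 * W / e).
by rewrite /gs_coords /=; congr (_, _); field; rewrite e_neq0 W_neq0.
Qed.

Lemma sff_gs_coords :
  [/\ a = E *: P1 + 0 *: P2 + 0 *: P12,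
      b = F *: P1 + 0 *: P2 + W *: P12
    & d = (F ^+ 2 / E) *: P1 + (W ^+ 2 / E) *: P2 + (2 * F * W / E) *: P12].
Proof.
by split; apply/funext => k; rewrite /quad_bil /gs_coords !fctRE /= ?eE; field;
  rewrite ?e_neq0 ?W_neq0.
Qed.

Lemma gs_flat : ellipse_flat P1 P2 P12 ->
  [/\ cross a b = 0, cross a d = 0 & cross b d = 0].
Proof.
case: sff_gs_coords => ha hb hd [f12 f1_12 f2_12].
have cross_P (x1 y1 z1 x2 y2 z2 : R) :
    cross (x1 *: P1 + y1 *: P2 + z1 *: P12) (x2 *: P1 + y2 *: P2 + z2 *: P12) = 0.
  by rewrite cross_lincomb3 f12 f1_12 f2_12 !mulr0 !addr0.
split.
- by move: (cross_P E 0 0 F 0 W); rewrite -ha -hb.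
- by move: (cross_P E 0 0 (F ^+ 2 / E) (W ^+ 2 / E) (2 * F * W / E)); rewrite -ha -hd.
- by move: (cross_P F 0 W (F ^+ 2 / E) (W ^+ 2 / E) (2 * F * W / E)); rewrite -hb -hd.
Qed.

Lemma trace_gs_coords :
  E * (2 / W * cross b d) + G * (2 / W * cross a b) - 2 * F * (1 / W * cross a d)
  = 2 * W ^+ 2 * cross (P1 - P2) P12.
Proof.
by rewrite /cross /quad_bil /gs_coords !fctRE /= G_eq eE; field; rewrite e_neq0 W_neq0.
Qed.

End GramSchmidt.

Section NormalFrame.
Variable R : realType.
Implicit Types x y w : vec4 R.

Lemma dotDl x y w : dot (x + y) w = dot x w + dot y w.
Proof. by rewrite /dot !big_ord_recr !big_ord0 /= !mxE; ring. Qed.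

Lemma dotZl (c : R) x w : dot (c *: x) w = c * dot x w.
Proof. by rewrite /dot !big_ord_recr !big_ord0 /= !mxE; ring. Qed.

Lemma dotC x w : dot x w = dot w x.
Proof. by rewrite /dot !big_ord_recr !big_ord0 /=; ring. Qed.

Lemma dot_ge0 x : 0 <= dot x x.
Proof. by rewrite /dot !big_ord_recr !big_ord0 /= add0r !addr_ge0 ?sqr_ge0. Qed.

Definition frame_vec (E1 E2 : vec4 R) (v : bool -> R) : vec4 R :=
  v true *: E1 + v false *: E2.

Definition normal_coords (E1 E2 x : vec4 R) : bool -> R :=
  fun k => dot x (if k then E1 else E2).

Fact frame_vec_is_linear E1 E2 : linear (frame_vec E1 E2).
Proof. by move=> c u v; apply/rowP => j; rewrite !mxE !fctRE; ring. Qed.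

HB.instance Definition _ E1 E2 := GRing.isLinear.Build R (bool -> R) (vec4 R) *:%R
  (frame_vec E1 E2) (frame_vec_is_linear E1 E2).

Fact normal_coords_is_linear E1 E2 : linear (normal_coords E1 E2).
Proof. by move=> c x y; apply/funext => k; rewrite /normal_coords !fctRE dotDl dotZl. Qed.

HB.instance Definition _ E1 E2 := GRing.isLinear.Build R (vec4 R) (bool -> R) *:%R
  (normal_coords E1 E2) (normal_coords_is_linear E1 E2).

Lemma frame_vecK E1 E2 : dot E1 E1 = 1 -> dot E2 E2 = 1 -> dot E1 E2 = 0 ->
  cancel (frame_vec E1 E2) (normal_coords E1 E2).
Proof.
move=> E11 E22 E12 v; apply/funext => -[];
  by rewrite /normal_coords /frame_vec dotDl !dotZl ?(dotC E2 E1) ?E11 ?E22 ?E12; ring.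
Qed.

End NormalFrame.

Section Geometry.
Variable R : realType.
Variables (z e1 e2 : param R) (p : R * R).
Hypothesis frame_at : normal_frame_at z e1 e2 p.
Hypothesis nonflat : ~ flat_point z e1 e2 p.

Local Notation E1 := (e1 p.1 p.2).
Local Notation E2 := (e2 p.1 p.2).
Local Notation a := (c11 z e1 e2 p).
Local Notation b := (c12 z e1 e2 p).
Local Notation d := (c22 z e1 e2 p).
Local Notation E := (fE z p).
Local Notation F := (fF z p).
Local Notation G := (fG z p).
Local Notation W := (fW z p).
Local Notation e := (Num.sqrt (fE z p)).

Local Notation frame := (frame_vec E1 E2).
Local Notation coords := (normal_coords E1 E2).

Let frame_lincomb (s t : R) (u v : bool -> R) :
  frame (s *: u + t *: v) = s *: frame u + t *: frame v.
Proof. by rewrite linearD !linearZ_LR. Qed.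

Let frameK : cancel frame coords.
Proof. by case: frame_at => E11 E22 E12 _ _; apply: frame_vecK. Qed.

Lemma sigma_frame_vec x : sigma z e1 e2 p x = frame (quad_bil a b d x x).
Proof.
rewrite /sigma -[s11 _ _ _ _]/(frame a) -[s12 _ _ _ _]/(frame b).
rewrite -[s22 _ _ _ _]/(frame d) /frame_vec /quad_bil.
(* Generalizing keeps unification from unfolding the derivatives hidden in [a], [b], [d]. *)
move: a b d E1 E2 => a b d E1 E2.
by apply/rowP => j; rewrite !mxE !fctRE; ring.
Qed.

Lemma cL_cross : cL z e1 e2 p = 2 / W * cross a b.
Proof. by rewrite /cL /cross; congr (_ * (_ - _)); exact: mulrC. Qed.
Lemma cM_cross : cM z e1 e2 p = 1 / W * cross a d.
Proof. by rewrite /cM /cross; congr (_ * (_ - _)); exact: mulrC. Qed.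
Lemma cN_cross : cN z e1 e2 p = 2 / W * cross b d.
Proof. by rewrite /cN /cross; congr (_ * (_ - _)); exact: mulrC. Qed.

Lemma fW_gt0 : 0 < W.
Proof.
have : 0 <= W := sqrtr_ge0 _; rewrite le_eqVlt => /orP[/eqP W0 | //].
have div0 (x y : R) : x / 0 * y = 0 by rewrite invr0 mulr0 mul0r.
by case: nonflat; rewrite /flat_point cL_cross cM_cross cN_cross -W0; split; apply: div0.
Qed.

Lemma disc_gt0 : 0 < E * G - F ^+ 2. Proof. by rewrite -sqrtr_gt0 fW_gt0. Qed.

Lemma fE_gt0 : 0 < E.
Proof.
rewrite lt_def dot_ge0 andbT; apply/eqP => E0.
by have := disc_gt0; rewrite E0 mul0r; have := sqr_ge0 F; lra.
Qed.

Local Notation onb := (gs_coords F e W).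
Local Notation P1 := (quad_bil a b d (onb 1 0) (onb 1 0)).
Local Notation P2 := (quad_bil a b d (onb 0 1) (onb 0 1)).
Local Notation P12 := (quad_bil a b d (onb 1 0) (onb 0 1)).

Let eE : E = e ^+ 2. Proof. by rewrite sqr_sqrtr // ltW // fE_gt0. Qed.
Let WG : W ^+ 2 = E * G - F ^+ 2. Proof. by rewrite sqr_sqrtr // ltW // disc_gt0. Qed.
Let e_neq0 : e != 0. Proof. by rewrite gt_eqF // sqrtr_gt0 fE_gt0. Qed.
Let W_neq0 : W != 0. Proof. by rewrite gt_eqF // fW_gt0. Qed.

Lemma Iform_onb c s c' s' : Iform z p (onb c s) (onb c' s') = c * c' + s * s'.
Proof. exact: gs_coords_orthonormal eE WG e_neq0 W_neq0 c s c' s'. Qed.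

Lemma sigma_onb c s : sigma z e1 e2 p (onb c s) = frame (ellipse_point P1 P2 P12 c s).
Proof. by rewrite sigma_frame_vec quad_gs_coords. Qed.

Lemma nonflat_ellipse : ~ ellipse_flat P1 P2 P12.
Proof.
case/(gs_flat eE e_neq0 W_neq0) => ab ad bd; apply: nonflat; split.
- by rewrite cL_cross ab mulr0.
- by rewrite cM_cross ad mulr0.
- by rewrite cN_cross bd mulr0.
Qed.

Lemma trace_cross :
  E * cN z e1 e2 p + G * cL z e1 e2 p - 2 * F * cM z e1 e2 p
  = 2 * W ^+ 2 * cross (P1 - P2) P12.
Proof. by rewrite cL_cross cM_cross cN_cross; exact: trace_gs_coords. Qed.

Lemma rect_hyperbola_iff : indicatrix_rect_hyperbola z e1 e2 p <-> cross (P1 - P2) P12 = 0.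
Proof.
have W2_neq0 : 2 * W ^+ 2 != 0 by rewrite mulf_neq0 ?pnatr_eq0 ?expf_neq0.
split.
- case=> nu1 [nu2 [roots [nu2E nu1_neq0]]]; rewrite nu2E in roots.
  have [] := (antipodal_roots _ _ disc_gt0).1 (ex_intro _ nu1 (conj roots nu1_neq0)).
  by rewrite trace_cross => /eqP; rewrite mulf_eq0 (negbTE W2_neq0) => /eqP.
- move=> cross0; have T0 : E * cN z e1 e2 p + G * cL z e1 e2 p - 2 * F * cM z e1 e2 p = 0.
    by rewrite trace_cross cross0 mulr0.
  have [n [roots n_neq0]] := (antipodal_roots _ _ disc_gt0).2
    (conj T0 (trace0_det_lt0 fE_gt0 disc_gt0 T0 nonflat)).
  by exists n, (- n).
Qed.

Lemma onb_surj x : exists c s, x = onb c s.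
Proof. exact: gs_coords_surj. Qed.

Lemma segment_iff : ellipse_segment_not_collinear_H z e1 e2 p <-> cross (P1 - P2) P12 = 0.
Proof.
split.
- case=> A [B [_ ellipse_eq _]].
  apply: (segment_ellipse_cross0 (A := coords A) (B := coords B)) => c s cs1.
  have : normal_ellipse z e1 e2 p (sigma z e1 e2 p (onb c s)).
    by exists (onb c s); rewrite //= Iform_onb -!expr2.
  rewrite ellipse_eq => -[t _ seg_t]; exists t.
  by move/(congr1 coords): seg_t; rewrite linearD !linearZ_LR sigma_onb frameK.
- move=> cross0; have [A [B [onto into indep]]] := ellipse_segment nonflat_ellipse cross0.
  exists (frame A), (frame B); split.
  + apply: contraNneq indep => /(can_inj frameK) ->.
    by rewrite subrr /cross !mulr0 subrr.
  + apply/seteqP; split=> _ /= [x x1 <-].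
      have [c [s xE]] := onb_surj x; rewrite xE /= Iform_onb -!expr2 in x1.
      have [t t01 ept] := onto c s x1.
      exists t; first by rewrite /= in_itv.
      by rewrite xE sigma_onb ept frame_lincomb.
    rewrite /= in_itv /= in x1; have [c [s [cs1 ept]]] := into x x1.
    by exists (onb c s); rewrite /= ?Iform_onb -?expr2 // sigma_onb ept frame_lincomb.
  + move=> h [x [y [x1 y1 xy ->]]] s t st0.
    have [c1 [s1 xE]] := onb_surj x; have [c2 [s2 yE]] := onb_surj y.
    rewrite xE yE !Iform_onb -!expr2 in x1 y1 xy.
    apply: (cross_free indep); apply: (can_inj frameK); rewrite linear0 -{}st0.
    rewrite xE yE !sigma_onb frame_lincomb -(ellipse_center_orthonormal P1 P2 P12 x1 y1 xy).
    by rewrite linearZ_LR linearD linearB.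
Qed.

Lemma rect_hyperbola_iff_segment :
  indicatrix_rect_hyperbola z e1 e2 p <-> ellipse_segment_not_collinear_H z e1 e2 p.
Proof. by rewrite rect_hyperbola_iff segment_iff. Qed.

End Geometry.

Unset Implicit Arguments.
Theorem corollary3p6 (R : realType) (D : set (R * R)) (z e1 e2 : param R) :
  open D ->
  smooth_on D z ->
  (forall p, D p -> regular_at z p) ->
  (forall p, D p -> normal_frame_at z e1 e2 p) ->
  (forall p, D p -> ~ flat_point z e1 e2 p) ->
  ((forall p, D p -> indicatrix_rect_hyperbola z e1 e2 p) <->
   (forall p, D p -> ellipse_segment_not_collinear_H z e1 e2 p)).
Proof.
move=> _ _ _ frame_at nonflat.
by split=> h q Dq; apply/(rect_hyperbola_iff_segment (frame_at q Dq) (nonflat q Dq)); exact: h.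
Qed.
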